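(* Let $X$ be an infinite first-countable compact Hausdorff space. Then $X$ is a $\Delta$-space if and only if $X$ is countable.
   Context: A topological space $X$ is a $\Delta$-space if for every decreasing sequence $\{D_n:n\in\omega\}$ of subsets of $X$ with $\bigcap_n D_n=\emptyset$ there is a decreasing sequence $\{V_n:n\in\omega\}$ of open subsets of $X$ with $D_n\subseteq V_n$ for all $n$ and $\bigcap_n V_n=\emptyset$. *)

From HB Require Import structures.
From mathcomp Require Import all_boot all_order all_algebra.
From mathcomp Require Import all_classical all_reals all_analysis.
Set Implicit Arguments. Unset Strict Implicit. Unset Printing Implicit Defensive.
Local Open Scope classical_set_scope.

Definition first_countable (X : topologicalType) : Prop :=
  forall x : X, exists B : nat -> set X,
    (forall n, nbhs x (B n)) /\
    (forall U, nbhs x U -> exists n, B n `<=` U).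

Definition delta_space (X : topologicalType) : Prop :=
  forall D : nat -> set X,
    (forall n, D n.+1 `<=` D n) ->
    \bigcap_n D n = set0 ->
    exists V : nat -> set X,
      (forall n, open (V n)) /\
      (forall n, V n.+1 `<=` V n) /\
      (forall n, D n `<=` V n) /\
      \bigcap_n V n = set0.

From HB Require Import structures.
From mathcomp Require Import all_boot all_order all_algebra.
From mathcomp Require Import all_classical all_reals all_analysis.
Local Open Scope classical_set_scope.

(* Countable => Delta holds in every T1 space: enumerate X injectively by f
   and let V_n be the complement of the finite (hence closed) set of points
   x with f x < n that lie outside D_n.

   Delta => countable goes by contradiction.  If X is uncountable, its
   condensation points (points all of whose neighbourhoods are uncountable)
   exist by compactness and, by first countability and regularity, form a
   set in which no point is isolated.  Following basic neighbourhoods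
   produces a countable nonempty subset A with no isolated points.
   Enumerating A, the tails D_n of A have empty intersection, while any open
   V_n containing D_n meets every open set that meets A; a nested-closure
   (Baire-type) argument in the compact regular space X then produces a
   point in every V_n, so X is not a Delta-space. *)

Lemma subset_countable T (A B : set T) : A `<=` B -> countable B -> countable A.
Proof. by move=> AB; apply/sub_countable/subset_card_le. Qed.

Lemma countable_setU T (A B : set T) :
  countable A -> countable B -> countable (A `|` B).
Proof.
by move=> cA cB; rewrite -bigcup2E; apply: bigcup_countable => [|[|[|n]] _] //=.
Qed.

Lemma nonincreasing_setP {T} {E : nat -> set T} :
  (forall n, E n.+1 `<=` E n) -> forall m n, (m <= n)%N -> E n `<=` E m.
Proof.
move=> E_dec m n /subnK <-; elim: (n - m)%N => // k IH.
by rewrite addSn; apply: subset_trans IH.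
Qed.

Lemma countable_delta_space (X : topologicalType) :
  accessible_space X -> countable [set: X] -> delta_space X.
Proof.
move=> T1X /countable_injP[f /(_ _ _ (mem_set I) (mem_set I)) finj] D D_dec D0.
pose E n := [set x | (f x < n)%N /\ ~ D n x].
have E_closed n : closed (E n).
  apply: (accessible_finite_set_closed.1 T1X); apply/finite_set_leP.
  by exists n; apply/pcard_leP/injfunPex; exists f => [x [] |x y _ _ /finj].
have notD_mono m n x : (m <= n)%N -> ~ D m x -> ~ D n x.
  by move=> mn nDmx /(nonincreasing_setP D_dec _ _ mn).
exists (fun n => ~` E n); split; [|split; [|split]].
- by move=> n; rewrite openC.
- by move=> n x + [fxn nDx]; apply; split; [exact: ltnW | exact: notD_mono nDx].
- by move=> n x Dx [].
apply/seteqP; split => // x Vx.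
have [m nDmx] : exists m, ~ D m x.
  apply: contrapT => /forallNP Dx; suff : (\bigcap_n D n) x by rewrite D0.
  by move=> k _; apply: contrapT; exact: Dx.
apply: (Vx (maxn m (f x).+1) I); split; first by rewrite leq_max leqnn orbT.
by apply: notD_mono nDmx; rewrite leq_maxl.
Qed.

Definition dense_in_itself {X : topologicalType} (A : set X) : Prop :=
  forall a U, A a -> nbhs a U -> exists b, [/\ A b, U b & b <> a].

Lemma dense_in_itself_unbounded {X : topologicalType} {A : set X} {f : X -> nat} :
  accessible_space X -> dense_in_itself A -> {in A &, injective f} ->
  forall n U, open U -> U `&` A !=set0 -> exists b, [/\ U b, A b & (n <= f b)%N].
Proof.
move=> T1X A_dense finj; elim=> [|n IH] U U_open UA0.
  by have [a [Ua Aa]] := UA0; exists a.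
have [b [Ub Ab]] := IH U U_open UA0.
rewrite leq_eqVlt => /orP[/eqP fb|ltnb]; last by exists b.
have [b' [Ab' Ub' b'b]] := A_dense b U Ab (open_nbhs_nbhs (conj U_open Ub)).
have [W [W_open b'W bW]] := T1X b' b (introN eqP b'b).
rewrite !inE in b'W bW.
have UWA0 : U `&` W `&` A !=set0 by exists b'.
have [c [[Uc Wc] Ac]] := IH (U `&` W) (openI U_open W_open) UWA0.
rewrite leq_eqVlt => /orP[/eqP fc|ltnc]; last by exists c.
by case: bW; rewrite (finj b c) ?inE // -fb.
Qed.

(* In a first-countable space, every point of a set without isolated points
   lies in a countable subset without isolated points: close it up under a
   choice of nearby points in each basic neighbourhood. *)
Lemma countable_dense_in_itself_subset {X : topologicalType} {C : set X} {c : X} :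
  first_countable X -> dense_in_itself C -> C c ->
  exists A, [/\ countable A, A c & dense_in_itself A].
Proof.
move=> X_fc C_dense Cc; have [B B_base] := choice X_fc.
have /choice[y y_spec] : forall xn : X * nat, exists y,
    C xn.1 -> [/\ C y, B xn.1 xn.2 y & y <> xn.1].
  case=> x n /=; have [Cx|] := pselect (C x); last by exists x.
  by have [z Cz] := C_dense x _ Cx ((B_base x).1 n); exists z.
pose h (s : seq nat) := foldr (fun n x => y (x, n)) c s.
have Ch s : C (h s) by elim: s => //= n s IH; have [] := y_spec (h s, n) IH.
exists (range h); split.
- exact: sub_countable (card_image_le _ _) (countableP _).
- by exists [::].
move=> _ U [s _ <-] hsU; have [n BU] := (B_base (h s)).2 U hsU.
have [_ Bhns hns] := y_spec (h s, n) (Ch s).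
by exists (h (n :: s)); split; [exists (n :: s) | exact: BU Bhns |].
Qed.

Definition condensation_point {X : topologicalType} (K : set X) (p : X) : Prop :=
  forall B, nbhs p B -> ~ countable (K `&` B).

Section CompactSpace.
Variable X : topologicalType.
Hypothesis X_compact : compact [set: X].
Hypothesis X_hausdorff : hausdorff_space X.

Lemma compact_nested_closure (U : nat -> set X) :
  (forall n, U n.+1 `<=` U n) -> (forall n, U n !=set0) ->
  exists p, forall n, closure (U n) p.
Proof.
move=> U_dec U_neq0; pose F := filter_from [set: nat] U.
have F_proper : ProperFilter F.
  apply: filter_from_proper => [|n _]; last exact: U_neq0.
  apply: filter_from_filter => [|m n _ _]; first by exists 0%N.
  by exists (maxn m n) => //; rewrite subsetI;
    split; apply: nonincreasing_setP; rewrite ?leq_maxl ?leq_maxr.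
have [p [_ Fp]] := X_compact F F_proper (@filterT _ F F_proper).
by exists p => n B pB; apply: Fp pB; exists n.
Qed.

(* Every uncountable closed set contains one of its condensation points:
   apply compactness to the filter of sets with countable complement in K. *)
Lemma exists_condensation_point {K : set X} :
  closed K -> ~ countable K -> exists2 p, K p & condensation_point K p.
Proof.
move=> K_closed K_uncountable; pose F A := countable (K `\` A).
have F_proper : ProperFilter F.
  constructor; first by rewrite /F setD0.
  constructor; first by rewrite /F setDT; exact: countable0.
  - by move=> A B FA FB; rewrite /F setDIr; exact: countable_setU.
  - by move=> A B AB; apply: subset_countable => x [Kx nAx]; split => // /AB.
have [p [_ Fp]] := X_compact F F_proper (@filterT _ F F_proper).
have Kp : K p.
  by apply: K_closed => B pB; apply: Fp pB; rewrite /F setDv; exact: countable0.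
exists p => // B pB KB_countable.
have FKB : F (K `\` B).
  apply: subset_countable KB_countable => x [Kx nKnBx].
  by split => //; apply: contrapT => nBx; exact: nKnBx.
by have [x [[_ nBx] Bx]] := Fp _ _ FKB pB.
Qed.

Lemma open_closure_shrink {x : X} {U : set X} :
  nbhs x U -> exists W, [/\ open W, W x & closure W `<=` U].
Proof.
move=> xU; have [W xW WU] :=
  @compact_regular X x setT X_hausdorff X_compact filterT U xU.
exists (interior W); split => //; first exact: open_interior.
exact: subset_trans (closureS (@interior_subset _ W)) WU.
Qed.

(* Baire-type property: if each open V_n meets every open set meeting A
   (inside A), the V_n have a common point.  Build nested open sets U_n
   meeting A with closure U_{n+1} inside U_n and V_n. *)
Lemma compact_bigcap_open {A : set X} {V : nat -> set X} :
  A !=set0 -> (forall n, open (V n)) ->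
  (forall n U, open U -> U `&` A !=set0 -> U `&` V n `&` A !=set0) ->
  \bigcap_n V n !=set0.
Proof.
move=> A_neq0 V_open V_dense; pose good U := open U /\ U `&` A !=set0.
have /choice[next next_spec] : forall nU : nat * set X, exists U',
    good nU.2 -> good U' /\ closure U' `<=` nU.2 `&` V nU.1.
  case=> n U /=; have [[U_open UA0]|] := pselect (good U); last by exists set0.
  have [a [[Ua Va] Aa]] := V_dense n U U_open UA0.
  have [W [W_open Wa WUV]] := open_closure_shrink
    (open_nbhs_nbhs (conj (openI U_open (V_open n)) (conj Ua Va))).
  by exists W => _; split => //; split => //; exists a.
pose fix U n := if n is m.+1 then next (m, U m) else setT.
have U_good n : good (U n).
  elim: n => [|n IH]; first by split; [exact: openT | rewrite setTI].
  exact: (next_spec (n, U n) IH).1.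
have U_step n : closure (U n.+1) `<=` U n `&` V n.
  exact: (next_spec (n, U n) (U_good n)).2.
have [p Up] : exists p, forall n, closure (U n) p.
  apply: compact_nested_closure => [n x Ux|n].
    by have [] := U_step n x (subset_closure Ux).
  by have [_ [x [Ux _]]] := U_good n; exists x.
by exists p => n _; have [] := U_step n p (Up n.+1).
Qed.

(* In a first-countable compact Hausdorff space, condensation points have no
   isolated points: inside a closed neighbourhood K of x, some K minus a
   basic open neighbourhood of x is still uncountable, and a condensation
   point of it is a condensation point different from x. *)
Lemma condensation_points_dense_in_itself :
  first_countable X -> dense_in_itself (condensation_point [set: X]).
Proof.
move=> X_fc x U x_cond xU; have [B [Bx B_base]] := X_fc x.
have [W [W_open Wx WU]] := open_closure_shrink xU.
pose K := closure W; pose O n := interior (B n).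
have K_cover : K `<=` \bigcup_(n in [set: nat]) (K `\` O n) `|` [set x].
  move=> y Ky; have [->|yx] := pselect (y = x); first by right.
  have [G [G_open Gx Gy]] :=
    hausdorff_accessible X_hausdorff (introN eqP (nesym yx)).
  rewrite !inE in Gx Gy.
  have [m BG] := B_base G (open_nbhs_nbhs (conj G_open Gx)).
  by left; exists m => //; split => // /interior_subset /BG.
have [n KOn_uncountable] : exists n, ~ countable (K `\` O n).
  apply: contrapT => /forallNP KO_countable; apply: (x_cond K).
    exact: filterS (@subset_closure _ W) (open_nbhs_nbhs (conj W_open Wx)).
  rewrite setTI; apply: subset_countable K_cover _.
  apply: countable_setU; last exact: countable1.
  by apply: bigcup_countable => // k _; exact: contrapT (KO_countable k).
have KOn_closed : closed (K `\` O n).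
  by apply: closedI; [exact: closed_closure | exact/open_closedC/open_interior].
have [p [Kp nOp] p_cond] :=
  exists_condensation_point KOn_closed KOn_uncountable.
exists p; split.
- move=> C pC cC; apply: (p_cond C pC); apply: subset_countable cC.
  by move=> z [].
- exact: WU.
- by move=> px; apply: nOp; rewrite px; exact: Bx.
Qed.

(* A countable nonempty set without isolated points prevents X from being a
   Delta-space: the tails of an enumeration of A form the witness. *)
Lemma dense_in_itself_not_delta (A : set X) :
  countable A -> A !=set0 -> dense_in_itself A -> ~ delta_space X.
Proof.
move=> /countable_injP[f finj] A_neq0 A_dense X_delta.
pose D n := [set a | A a /\ (n <= f a)%N].
have D_dec n : D n.+1 `<=` D n by move=> a [Aa na]; split => //; exact: ltnW.
have D0 : \bigcap_n D n = set0.
  by apply/seteqP; split => // a /(_ (f a).+1 I) [_]; rewrite ltnn.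
have [V [V_open [_ [DV V0]]]] := X_delta D D_dec D0.
have [p Vp] : \bigcap_n V n !=set0.
  apply: (compact_bigcap_open A_neq0 V_open) => n U U_open UA0.
  have [b [Ub Ab nb]] := dense_in_itself_unbounded
    (hausdorff_accessible X_hausdorff) A_dense finj n U U_open UA0.
  by exists b; split => //; split => //; exact: DV.
by rewrite V0 in Vp.
Qed.

Lemma delta_space_countable :
  first_countable X -> delta_space X -> countable [set: X].
Proof.
move=> X_fc X_delta; apply: contrapT => X_uncountable.
have [c _ c_cond] := exists_condensation_point closedT X_uncountable.
have [A [A_countable Ac A_dense]] := countable_dense_in_itself_subset X_fc
  (condensation_points_dense_in_itself X_fc) c_cond.
exact: dense_in_itself_not_delta A_countable (ex_intro _ c Ac) A_dense X_delta.
Qed.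
End CompactSpace.

Theorem proposition3p5 (X : topologicalType) :
  infinite_set [set: X] ->
  first_countable X ->
  compact [set: X] ->
  hausdorff_space X ->
  (delta_space X <-> countable [set: X]).
Proof.
move=> _ X_fc X_compact X_hausdorff; split.
- exact: delta_space_countable.
- exact: countable_delta_space (hausdorff_accessible X_hausdorff).
Qed.
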